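(* For every positive integer $n$, the set $\mathcal{M}_n$ is a closed subset of $\mathbb{R}$.
   Context: For reals $\xi\ne\xi'$ and a positive integer $n$, $\mu_n(\xi,\xi') = \sup_{(s,t)\in\mathbb{Z}^2\setminus\{0\}} \dfrac{\gcd(t,n)\,|\xi-\xi'|}{|s-t\xi|\,|s-t\xi'|} \in\mathbb{R}\cup\{\infty\}$ (with $\gcd(0,n)=n$), and $\mathcal{M}_n$ is the set of finite values of $\mu_n(\xi,\xi')$ over pairs of reals $\xi\neq\xi'$. *)

From Stdlib Require Import Reals ZArith Rtopology.
From Coquelicot Require Import Coquelicot.
Open Scope R_scope.

(* One term of the supremum defining mu_n(xi,xi') for (s,t) in Z^2 \ {0}:
   gcd(t,n)|xi-xi'| / (|s-t xi| |s-t xi'|), taken to be +infinity when the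
   denominator vanishes (i.e. s/t equals xi or xi'). *)
Definition mu_term (n : nat) (xi xi' : R) (s t : Z) : Rbar :=
  let d := Rabs (IZR s - IZR t * xi) * Rabs (IZR s - IZR t * xi') in
  if Req_EM_T d 0 then p_infty
  else Finite (IZR (Z.gcd t (Z.of_nat n)) * Rabs (xi - xi') / d).

Definition mu (n : nat) (xi xi' : R) : Rbar :=
  Rbar_lub (fun v : Rbar => exists s t : Z,
              (s <> 0%Z \/ t <> 0%Z) /\ v = mu_term n xi xi' s t).

Definition M (n : nat) : R -> Prop :=
  fun m => exists xi xi' : R, xi <> xi' /\ mu n xi xi' = Finite m.

(* Write x = g e and x' = g e' with g in SL_2(Z) of bottom row (c, d): the terms of mu_n(x, x')
   become gcd(c s + d t, n) |e - e'| / (|s - t e| |s - t e'|). Taking as first column of g a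
   primitive vector (s, t) at which the supremum m = mu_n(x, x') is almost attained moves that
   term to (1, 0), and a unimodular shift puts e in [0, 1]. The resulting normal form depends on
   (c, d) only modulo n and is defined by closed inequalities. Hence, for m_k in M_n tending to x,
   a subsequence with constant (c, d) mod n and convergent (e, e') yields a limit pair realising x.
   This pair is non-degenerate because M_n lies in [1/2, oo), by Dirichlet's approximation
   theorem. *)

From Stdlib Require Import Reals ZArith Znumtheory Rtopology Lia Lra.
From Stdlib Require Import Classical IndefiniteDescription FinFun.
From Coquelicot Require Import Coquelicot.
Open Scope R_scope.

Definition mu_den (x x' : R) (s t : Z) : R :=
  Rabs (IZR s - IZR t * x) * Rabs (IZR s - IZR t * x').

Lemma mu_den_nonneg x x' s t : 0 <= mu_den x x' s t.
Proof. apply Rmult_le_pos; apply Rabs_pos. Qed.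

Lemma mu_den_1_0 x x' : mu_den x x' 1 0 = 1.
Proof. unfold mu_den; rewrite !Rmult_0_l, !Rminus_0_r, Rabs_R1; ring. Qed.

Lemma mu_den_neq0 x x' s t : mu_den x x' s t <> 0 ->
  IZR s - IZR t * x <> 0 /\ IZR s - IZR t * x' <> 0.
Proof.
  intros den_neq0; split; intros E; apply den_neq0; unfold mu_den; rewrite E, Rabs_R0; ring.
Qed.

Lemma mu_den_scale x x' s t g : mu_den x x' (s * g) (t * g) = IZR g * IZR g * mu_den x x' s t.
Proof.
  unfold mu_den; rewrite !mult_IZR.
  replace (IZR s * IZR g - IZR t * IZR g * x) with (IZR g * (IZR s - IZR t * x)) by ring.
  replace (IZR s * IZR g - IZR t * IZR g * x') with (IZR g * (IZR s - IZR t * x')) by ring.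
  rewrite <- (Rabs_pos_eq (IZR g * IZR g)) by apply Rle_0_sqr.
  rewrite !Rabs_mult; ring.
Qed.

(** * Moebius transformations *)

Definition moebius (a b c d : Z) (e : R) : R :=
  (IZR a * e + IZR b) / (IZR c * e + IZR d).

Lemma sl2_pair_neq0 (a b c d s t : Z) : (a * d - b * c = 1)%Z -> (s <> 0 \/ t <> 0)%Z ->
  (a * s + b * t <> 0 \/ c * s + d * t <> 0)%Z.
Proof.
  intros det st.
  assert (s_eq : s = (d * (a * s + b * t) - b * (c * s + d * t))%Z).
  { transitivity (s * (a * d - b * c))%Z; [rewrite det|]; ring. }
  assert (t_eq : t = (a * (c * s + d * t) - c * (a * s + b * t))%Z).
  { transitivity (t * (a * d - b * c))%Z; [rewrite det|]; ring. }
  destruct (Z.eq_dec (a * s + b * t) 0) as [E1|E1]; [|auto].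
  destruct (Z.eq_dec (c * s + d * t) 0) as [E2|E2]; [|auto].
  rewrite E1, E2 in s_eq, t_eq; lia.
Qed.

Section Moebius.

Variables a b c d : Z.
Hypothesis det : (a * d - b * c = 1)%Z.

Let detR : IZR a * IZR d - IZR b * IZR c = 1.
Proof. rewrite <- !mult_IZR, <- minus_IZR, det; reflexivity. Qed.

Lemma moebius_sub e e' : IZR c * e + IZR d <> 0 -> IZR c * e' + IZR d <> 0 ->
  moebius a b c d e - moebius a b c d e' = (e - e') / ((IZR c * e + IZR d) * (IZR c * e' + IZR d)).
Proof.
  intros q_neq0 q'_neq0; unfold moebius.
  rewrite <- (Rmult_1_r (e - e')), <- detR; field; auto.
Qed.

Lemma moebius_lin e s t : IZR c * e + IZR d <> 0 ->
  IZR (a * s + b * t) - IZR (c * s + d * t) * moebius a b c d e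
  = (IZR s - IZR t * e) / (IZR c * e + IZR d).
Proof.
  intros q_neq0; unfold moebius; rewrite !plus_IZR, !mult_IZR.
  rewrite <- (Rmult_1_r (IZR s - IZR t * e)), <- detR; field; auto.
Qed.

Lemma moebius_scaling e e' : IZR c * e + IZR d <> 0 -> IZR c * e' + IZR d <> 0 ->
  exists w, 0 < w /\
    Rabs (moebius a b c d e - moebius a b c d e') = w * Rabs (e - e') /\
    forall s t, mu_den (moebius a b c d e) (moebius a b c d e') (a * s + b * t) (c * s + d * t)
                = w * mu_den e e' s t.
Proof.
  intros q_neq0 q'_neq0.
  exists (/ (Rabs (IZR c * e + IZR d) * Rabs (IZR c * e' + IZR d))); split; [|split].
  - apply Rinv_0_lt_compat, Rmult_lt_0_compat; apply Rabs_pos_lt; assumption.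
  - rewrite moebius_sub, Rabs_div, Rabs_mult by auto using Rmult_integral_contrapositive_currified.
    unfold Rdiv; ring.
  - intros s t; unfold mu_den; rewrite !moebius_lin, !Rabs_div by assumption.
    rewrite Rinv_mult; unfold Rdiv; ring.
Qed.

Lemma moebius_preimage x : IZR a - IZR c * x <> 0 ->
  exists e, IZR c * e + IZR d <> 0 /\ x = moebius a b c d e.
Proof.
  intros p_neq0; exists ((IZR d * x - IZR b) / (IZR a - IZR c * x)).
  assert (q_eq :
    IZR c * ((IZR d * x - IZR b) / (IZR a - IZR c * x)) + IZR d = / (IZR a - IZR c * x)).
  { transitivity ((IZR a * IZR d - IZR b * IZR c) / (IZR a - IZR c * x)).
    - field; assumption.
    - rewrite detR; field; assumption. }
  split.
  - rewrite q_eq; apply Rinv_neq_0_compat; assumption.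
  - assert (num_eq : IZR a * ((IZR d * x - IZR b) / (IZR a - IZR c * x)) + IZR b
                      = x / (IZR a - IZR c * x)).
    { transitivity (x * (IZR a * IZR d - IZR b * IZR c) / (IZR a - IZR c * x)).
      - field; assumption.
      - rewrite detR; field; assumption. }
    unfold moebius; rewrite q_eq, num_eq; field; assumption.
Qed.

End Moebius.

Lemma moebius_shift a b c d (j : Z) e :
  moebius a (b + j * a) c (d + j * c) (e - IZR j) = moebius a b c d e /\
  IZR c * (e - IZR j) + IZR (d + j * c) = IZR c * e + IZR d.
Proof.
  unfold moebius; rewrite !plus_IZR, !mult_IZR; split; [f_equal|]; ring.
Qed.

Lemma moebius_normal_form (s t : Z) (x x' : R) : Z.gcd s t = 1%Z -> mu_den x x' s t <> 0 ->
  exists b d e e', (s * d - b * t = 1)%Z /\ 0 <= e <= 1 /\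
    IZR t * e + IZR d <> 0 /\ IZR t * e' + IZR d <> 0 /\
    x = moebius s b t d e /\ x' = moebius s b t d e'.
Proof.
  intros coprime den_neq0.
  destruct (Z.gcd_bezout s t 1 coprime) as [u [v bezout]].
  assert (det : (s * u - - v * t = 1)%Z) by lia.
  destruct (mu_den_neq0 _ _ _ _ den_neq0) as [p_neq0 p'_neq0].
  destruct (moebius_preimage _ _ _ _ det x p_neq0) as [y [q_neq0 ->]].
  destruct (moebius_preimage _ _ _ _ det x' p'_neq0) as [y' [q'_neq0 ->]].
  destruct (base_Int_part y) as [floor_le floor_gt].
  set (j := Int_part y) in *.
  destruct (moebius_shift s (- v) t u j y) as [shift shift_q].
  destruct (moebius_shift s (- v) t u j y') as [shift' shift_q'].
  exists (- v + j * s)%Z, (u + j * t)%Z, (y - IZR j), (y' - IZR j).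
  rewrite shift, shift', shift_q, shift_q'.
  repeat split; auto; lia || lra.
Qed.

(** * Dirichlet's approximation theorem *)

Lemma Int_part_bounds (y : R) (N : Z) : 0 <= y < IZR N -> (0 <= Int_part y < N)%Z.
Proof.
  intros y_bounds; destruct (base_Int_part y) as [floor_le floor_gt].
  assert (lower : IZR (-1) < IZR (Int_part y)) by (simpl; lra).
  assert (upper : IZR (Int_part y) < IZR N) by lra.
  apply lt_IZR in lower, upper; lia.
Qed.

Lemma Int_part_eq_dist (y z : R) : Int_part y = Int_part z -> Rabs (y - z) < 1.
Proof.
  intros same; destruct (base_Int_part y), (base_Int_part z).
  rewrite same in *; apply Rabs_def1; lra.
Qed.

Lemma dirichlet_approximation (x : R) (N : nat) : (0 < N)%nat ->
  exists s t : Z, t <> 0%Z /\ (Z.abs t <= Z.of_nat N)%Z /\ INR N * Rabs (IZR s - IZR t * x) < 1.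
Proof.
  intros N_pos.
  set (cell := fun j : nat => Int_part (INR N * frac_part (INR j * x))).
  assert (cell_bounds : forall j, (0 <= cell j < Z.of_nat N)%Z).
  { intros j; apply Int_part_bounds; rewrite <- INR_IZR_INZ.
    destruct (base_fp (INR j * x)); pose proof (lt_0_INR N N_pos); nra. }
  assert (collision : exists i j, (i <= N)%nat /\ (j <= N)%nat /\ i <> j /\ cell i = cell j).
  { apply NNPP; intros no_collision.
    assert (inj : bInjective (S N) (fun j => Z.to_nat (cell j))).
    { intros i j i_lt j_lt same; apply NNPP; intros neq; apply no_collision; exists i, j.
      pose proof (cell_bounds i); pose proof (cell_bounds j); repeat split; lia. }
    apply bInjective_bSurjective in inj; [|intros j _; pose proof (cell_bounds j); lia].
    destruct (inj N (Nat.lt_succ_diag_r N)) as [j [_ hit]]; pose proof (cell_bounds j); lia. }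
  destruct collision as [i [j [i_le [j_le [neq same]]]]].
  exists (Int_part (INR j * x) - Int_part (INR i * x))%Z, (Z.of_nat j - Z.of_nat i)%Z.
  split; [lia|]; split; [lia|].
  replace (IZR _ - IZR _ * x) with (- (frac_part (INR j * x) - frac_part (INR i * x)))
    by (unfold frac_part; rewrite !minus_IZR, <- !INR_IZR_INZ; ring).
  rewrite Rabs_Ropp, <- (Rabs_pos_eq (INR N)) by apply pos_INR.
  rewrite <- Rabs_mult, Rmult_minus_distr_l.
  apply Int_part_eq_dist; symmetry; exact same.
Qed.

(* Take N with N |x - x'| > 1: Dirichlet gives |t| <= N and |s - t x| < 1/N, hence
   |s - t x'| < 1/N + N |x - x'| and a product below 1/N^2 + |x - x'| < 2 |x - x'|. *)
Lemma mu_den_bound_ge_half (x x' m : R) : x <> x' ->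
  (forall s t : Z, (s <> 0 \/ t <> 0)%Z -> Rabs (x - x') <= m * mu_den x x' s t) -> 1 / 2 <= m.
Proof.
  intros neq bound.
  set (delta := Rabs (x - x')).
  assert (delta_pos : 0 < delta) by apply Rabs_pos_lt, Rminus_eq_contra, neq.
  destruct (archimed (/ delta)) as [up_gt _].
  assert (up_pos : (0 < up (/ delta))%Z)
    by (apply lt_IZR; pose proof (Rinv_0_lt_compat _ delta_pos); lra).
  set (N := Z.to_nat (up (/ delta))).
  assert (N_eq : INR N = IZR (up (/ delta)))
    by (unfold N; rewrite INR_IZR_INZ, Z2Nat.id; [reflexivity|lia]).
  assert (N_pos : (0 < N)%nat) by lia.
  assert (N_ge_1 : 1 <= INR N) by (rewrite N_eq; apply IZR_le; lia).
  assert (N_delta : 1 < INR N * delta).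
  { rewrite N_eq; apply Rmult_lt_reg_r with (/ delta); [apply Rinv_0_lt_compat, delta_pos|].
    rewrite Rmult_assoc, Rinv_r, Rmult_1_r, Rmult_1_l by lra; exact up_gt. }
  destruct (dirichlet_approximation x N N_pos) as [s [t [t_neq0 [t_le approx]]]].
  specialize (bound s t (or_intror t_neq0)); unfold mu_den in bound; fold delta in bound.
  set (A := Rabs (IZR s - IZR t * x)) in *; set (B := Rabs (IZR s - IZR t * x')) in *.
  assert (B_le : B <= A + INR N * delta).
  { unfold B, A, delta.
    replace (IZR s - IZR t * x') with ((IZR s - IZR t * x) + IZR t * (x - x')) by ring.
    eapply Rle_trans; [apply Rabs_triang|]; rewrite Rabs_mult, <- abs_IZR.
    apply Rplus_le_compat_l, Rmult_le_compat_r; [apply Rabs_pos|].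
    rewrite INR_IZR_INZ; apply IZR_le; exact t_le. }
  assert (A_nonneg : 0 <= A) by apply Rabs_pos.
  assert (A_sq : A * A < delta).
  { assert (NA_nonneg : 0 <= INR N * A) by (apply Rmult_le_pos; lra).
    assert (NA_sq : INR N * A * (INR N * A) < 1) by nra.
    apply Rmult_lt_reg_l with (INR N * INR N); [nra|].
    replace (INR N * INR N * (A * A)) with (INR N * A * (INR N * A)) by ring; nra. }
  assert (AB_lt : A * B < 2 * delta) by nra.
  assert (AB_nonneg : 0 <= A * B) by (apply Rmult_le_pos; [lra|apply Rabs_pos]).
  apply Rnot_lt_le; intros m_lt.
  destruct (Rle_lt_dec m 0); nra.
Qed.

(** * Subsequences and closed sets *)

Definition extraction (phi : nat -> nat) : Prop := forall k, (phi k < phi (S k))%nat.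

Lemma extraction_comp phi psi :
  extraction phi -> extraction psi -> extraction (fun k => phi (psi k)).
Proof.
  intros ext_phi ext_psi k.
  assert (mono : forall i j, (i < j)%nat -> (phi i < phi j)%nat).
  { intros i j lt; induction lt as [|j lt IH]; [apply ext_phi|specialize (ext_phi j); lia]. }
  apply mono, ext_psi.
Qed.

Lemma is_lim_seq_extraction u phi (l : Rbar) : extraction phi -> is_lim_seq u l ->
  is_lim_seq (fun k => u (phi k)) l.
Proof. intros ext; apply is_lim_seq_subseq, eventually_subseq, ext. Qed.

Lemma extraction_of_frequently (P : nat -> nat -> Prop) :
  (forall j N, exists k, (N <= k)%nat /\ P j k) ->
  exists phi, extraction phi /\ forall j, P j (phi j).
Proof.
  intros freq.
  destruct (functional_choice (fun jN k => (snd jN <= k)%nat /\ P (fst jN) k)) as [f f_spec].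
  { intros [j N]; apply freq. }
  set (phi := fix phi j := match j with O => f (O, O) | S j' => f (S j', S (phi j')) end).
  assert (phi_S : forall j, phi (S j) = f (S j, S (phi j))) by reflexivity.
  exists phi; split.
  - intros j; rewrite phi_S; destruct (f_spec (S j, S (phi j))) as [le _]; simpl in le; lia.
  - intros [|j]; [apply (f_spec (O, O))|rewrite phi_S; apply (f_spec (S j, S (phi j)))].
Qed.

Lemma frequently_value (f : nat -> nat) (N : nat) : (forall k, (f k < N)%nat) ->
  exists v, forall K, exists k, (K <= k)%nat /\ f k = v.
Proof.
  revert f; induction N as [|N IH]; intros f f_lt; [specialize (f_lt O); lia|].
  destruct (classic (forall K, exists k, (K <= k)%nat /\ f k = N)) as [freq|not_freq].
  { exists N; exact freq. }
  apply not_all_ex_not in not_freq as [K0 no_N].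
  destruct (IH (fun k => f (K0 + k)%nat)) as [v freq].
  { intros k; specialize (f_lt (K0 + k)%nat).
    assert (f (K0 + k)%nat <> N) by (intros E; apply no_N; exists (K0 + k)%nat; auto with arith).
    lia. }
  exists v; intros K; destruct (freq K) as [k [le E]]; exists (K0 + k)%nat; split; [lia|exact E].
Qed.

Lemma extraction_constant (f : nat -> Z) (N : Z) : (forall k, (0 <= f k < N)%Z) ->
  exists phi, extraction phi /\ forall k, f (phi k) = f (phi O).
Proof.
  intros f_bounds.
  destruct (frequently_value (fun k => Z.to_nat (f k)) (Z.to_nat N)) as [v freq].
  { intros k; specialize (f_bounds k); lia. }
  destruct (extraction_of_frequently (fun _ k => Z.to_nat (f k) = v)) as [phi [ext hit]].
  { intros _; exact freq. }
  exists phi; split; [exact ext|]; intros k.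
  pose proof (f_bounds (phi k)); pose proof (f_bounds (phi O)).
  pose proof (hit k); pose proof (hit O); lia.
Qed.

Lemma is_lim_seq_of_dist (u : nat -> R) (l : R) : (forall k, Rabs (u k - l) < RinvN k) ->
  is_lim_seq u l.
Proof.
  intros close; apply is_lim_seq_le_le with (fun k => l - RinvN k) (fun k => l + RinvN k).
  - intros k; specialize (close k); apply Rabs_def2 in close; lra.
  - rewrite <- (Rminus_0_r l) at 1.
    apply is_lim_seq_minus'; [apply is_lim_seq_const|apply is_lim_seq_Reals, RinvN_cv].
  - rewrite <- (Rplus_0_r l) at 1.
    apply is_lim_seq_plus'; [apply is_lim_seq_const|apply is_lim_seq_Reals, RinvN_cv].
Qed.

Lemma extraction_bounded (u : nat -> R) (a b : R) : (forall k, a <= u k <= b) ->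
  exists phi (l : R), extraction phi /\ is_lim_seq (fun k => u (phi k)) l.
Proof.
  intros bounds.
  destruct (Bolzano_Weierstrass u _ (compact_P3 a b) bounds) as [l cluster].
  destruct (extraction_of_frequently (fun j k => Rabs (u k - l) < RinvN j)) as [phi [ext close]].
  { intros j N; destruct (cluster (disc l (RinvN j)) N) as [k hit]; [|exists k; exact hit].
    exists (RinvN j); intros y; auto. }
  exists phi, l; split; [exact ext|apply is_lim_seq_of_dist, close].
Qed.

Lemma is_lim_seq_abs_sub u v (l l' : R) : is_lim_seq u l -> is_lim_seq v l' ->
  is_lim_seq (fun k => Rabs (u k - v k)) (Rabs (l - l')).
Proof. intros; apply (is_lim_seq_abs _ (l - l')), is_lim_seq_minus'; assumption. Qed.

Lemma is_lim_seq_mu_den u v (l l' : R) s t : is_lim_seq u l -> is_lim_seq v l' ->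
  is_lim_seq (fun k => mu_den (u k) (v k) s t) (mu_den l l' s t).
Proof.
  intros u_lim v_lim; apply is_lim_seq_mult'; apply is_lim_seq_abs_sub;
    solve [apply is_lim_seq_const|apply (is_lim_seq_scal_l _ _ (Finite _)); assumption].
Qed.

Lemma extraction_normal_data (N : Z) (c d : nat -> Z) (e e' : nat -> R) (B : R) : (0 < N)%Z ->
  (forall k, Rabs (e k) <= B /\ Rabs (e' k) <= B) ->
  exists phi (l l' : R), extraction phi /\
    (forall k, c (phi k) mod N = c (phi O) mod N /\ d (phi k) mod N = d (phi O) mod N)%Z /\
    is_lim_seq (fun k => e (phi k)) l /\ is_lim_seq (fun k => e' (phi k)) l'.
Proof.
  intros N_pos bounds.
  destruct (extraction_constant (fun k => c k mod N)%Z N) as [phi1 [ext1 c_const]].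
  { intros k; apply Z.mod_pos_bound, N_pos. }
  destruct (extraction_constant (fun k => d (phi1 k) mod N)%Z N) as [phi2 [ext2 d_const]].
  { intros k; apply Z.mod_pos_bound, N_pos. }
  destruct (extraction_bounded (fun k => e (phi1 (phi2 k))) (- B) B) as [phi3 [l [ext3 e_lim]]].
  { intros k; apply Rabs_le_between, bounds. }
  destruct (extraction_bounded (fun k => e' (phi1 (phi2 (phi3 k)))) (- B) B)
    as [phi4 [l' [ext4 e'_lim]]].
  { intros k; apply Rabs_le_between, bounds. }
  exists (fun k => phi1 (phi2 (phi3 (phi4 k)))), l, l'; split; [|split; [|split]].
  - apply extraction_comp; [exact ext1|].
    apply extraction_comp; [exact ext2|].
    apply extraction_comp; assumption.
  - intros k; rewrite (c_const (phi2 _)), (c_const (phi2 (phi3 (phi4 O)))).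
    rewrite (d_const (phi3 _)), (d_const (phi3 (phi4 O))); split; reflexivity.
  - exact (is_lim_seq_extraction _ _ _ ext4 e_lim).
  - exact e'_lim.
Qed.

Lemma closed_set_of_approx (D : R -> Prop) :
  (forall u x, (forall k, D (u k)) -> (forall k, Rabs (u k - x) < RinvN k) -> D x) ->
  closed_set D.
Proof.
  intros seq_closed; apply closed_set_P1; split; [apply adherence_P1|]; intros x adh.
  destruct (functional_choice (fun k y => Rabs (y - x) < RinvN k /\ D y)) as [u u_spec].
  { intros k; apply (adh (disc x (RinvN k))); exists (RinvN k); intros y; auto. }
  apply (seq_closed u x); intros k; apply u_spec.
Qed.

(** * The sets M_n *)

Lemma Rbar_lub_eq_Finite (E : Rbar -> Prop) (m : R) :
  Rbar_lub E = Finite m <->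
  (forall v, E v -> Rbar_le v m) /\ (forall r, r < m -> exists v, E v /\ Rbar_lt r v).
Proof.
  unfold Rbar_lub; destruct (Rbar_ex_lub E) as [l [ub least]]; simpl proj1_sig.
  split.
  - intros ->; split; [exact ub|].
    intros r r_lt; apply NNPP; intros no_v.
    assert (m_le : Rbar_le m r).
    { apply least; intros v Ev; apply Rbar_not_lt_le; intros lt_v; apply no_v; exists v; auto. }
    simpl in m_le; lra.
  - intros [ub_m approx].
    apply Rbar_le_antisym; [exact (least _ ub_m)|].
    destruct l as [l| |]; simpl; trivial.
    + apply Rnot_lt_le; intros l_lt.
      destruct (approx l l_lt) as [v [Ev lt_v]].
      exact (Rbar_lt_not_le _ _ lt_v (ub v Ev)).
    + destruct (approx (m - 1)) as [v [Ev lt_v]]; [lra|].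
      exact (Rbar_lt_not_le _ _ lt_v (Rbar_le_trans _ _ _ (ub v Ev) I)).
Qed.

Lemma gcd_mod_compat (a a' N : Z) : (a mod N = a' mod N)%Z -> Z.gcd a N = Z.gcd a' N.
Proof. intros same_mod; rewrite <- Z.gcd_mod_l, same_mod, Z.gcd_mod_l; reflexivity. Qed.

Section Mu.

Variable n : nat.
Hypothesis n_pos : (0 < n)%nat.

Lemma gcd_ge_1 (t : Z) : 1 <= IZR (Z.gcd t (Z.of_nat n)).
Proof.
  apply IZR_le.
  assert (Z.gcd t (Z.of_nat n) <> 0%Z) by (intros E; apply Z.gcd_eq_0 in E; lia).
  pose proof (Z.gcd_nonneg t (Z.of_nat n)); lia.
Qed.

Lemma gcd_mul_Rabs_sub_pos x x' t : x <> x' -> 0 < IZR (Z.gcd t (Z.of_nat n)) * Rabs (x - x').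
Proof.
  intros neq; apply Rmult_lt_0_compat.
  - pose proof (gcd_ge_1 t); lra.
  - apply Rabs_pos_lt, Rminus_eq_contra, neq.
Qed.

Lemma mu_term_eq x x' s t : mu_term n x x' s t =
  if Req_EM_T (mu_den x x' s t) 0 then p_infty
  else Finite (IZR (Z.gcd t (Z.of_nat n)) * Rabs (x - x') / mu_den x x' s t).
Proof. reflexivity. Qed.

Lemma Rbar_le_mu_term x x' s t m : x <> x' ->
  Rbar_le (mu_term n x x' s t) (Finite m) <->
  IZR (Z.gcd t (Z.of_nat n)) * Rabs (x - x') <= m * mu_den x x' s t.
Proof.
  intros neq; pose proof (gcd_mul_Rabs_sub_pos x x' t neq).
  rewrite mu_term_eq; destruct (Req_EM_T (mu_den x x' s t) 0) as [D0|D_neq0]; simpl.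
  - rewrite D0, Rmult_0_r; split; [tauto|lra].
  - rewrite Rle_div_l; [lra|].
    pose proof (mu_den_nonneg x x' s t); lra.
Qed.

Lemma Rbar_lt_mu_term x x' s t r : x <> x' ->
  Rbar_lt (Finite r) (mu_term n x x' s t) <->
  r * mu_den x x' s t < IZR (Z.gcd t (Z.of_nat n)) * Rabs (x - x').
Proof.
  intros neq; pose proof (gcd_mul_Rabs_sub_pos x x' t neq).
  rewrite mu_term_eq; destruct (Req_EM_T (mu_den x x' s t) 0) as [D0|D_neq0]; simpl.
  - rewrite D0, Rmult_0_r; tauto.
  - rewrite <- Rlt_div_r; [tauto|].
    pose proof (mu_den_nonneg x x' s t); lra.
Qed.

(* [mu_bound 0 1 x x' m] says that [m] bounds every term of [mu n x x']; when [(c, d)] is the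
   bottom row of some [g] in SL_2(Z), [mu_bound c d e e' m] says the same of [(g e, g e')]. *)
Definition mu_bound (c d : Z) (e e' m : R) : Prop :=
  forall s t : Z, (s <> 0 \/ t <> 0)%Z ->
    IZR (Z.gcd (c * s + d * t) (Z.of_nat n)) * Rabs (e - e') <= m * mu_den e e' s t.

Lemma mu_eq_Finite x x' m : x <> x' ->
  mu n x x' = Finite m <->
  mu_bound 0 1 x x' m /\
  (forall r, r < m -> exists s t, (s <> 0 \/ t <> 0)%Z /\
     r * mu_den x x' s t < IZR (Z.gcd t (Z.of_nat n)) * Rabs (x - x')).
Proof.
  intros neq; unfold mu, mu_bound; rewrite Rbar_lub_eq_Finite.
  setoid_rewrite Z.mul_0_l; setoid_rewrite Z.mul_1_l; setoid_rewrite Z.add_0_l.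
  split; intros [ub approx]; split.
  - intros s t st; apply Rbar_le_mu_term; auto.
    apply ub; exists s, t; auto.
  - intros r r_lt; destruct (approx r r_lt) as [v [[s [t [st ->]]] lt_v]].
    exists s, t; split; [exact st|]; apply Rbar_lt_mu_term; auto.
  - intros v [s [t [st ->]]]; apply Rbar_le_mu_term; [exact neq|].
    apply ub; exact st.
  - intros r r_lt; destruct (approx r r_lt) as [s [t [st near]]].
    exists (mu_term n x x' s t); split; [exists s, t; auto|].
    apply Rbar_lt_mu_term; auto.
Qed.

Lemma mu_bound_den_pos c d e e' m s t : mu_bound c d e e' m -> e <> e' ->
  (s <> 0 \/ t <> 0)%Z -> 0 < m * mu_den e e' s t.
Proof.
  intros bound neq st; pose proof (gcd_mul_Rabs_sub_pos e e' (c * s + d * t) neq).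
  specialize (bound s t st); lra.
Qed.

Lemma mu_bound_sub_le c d e e' m : mu_bound c d e e' m -> Rabs (e - e') <= m.
Proof.
  intros bound; specialize (bound 1%Z 0%Z ltac:(lia)).
  rewrite mu_den_1_0, Rmult_1_r in bound.
  pose proof (gcd_ge_1 (c * 1 + d * 0)); pose proof (Rabs_pos (e - e')); nra.
Qed.

Lemma mu_bound_moebius a b c d e e' m : (a * d - b * c = 1)%Z ->
  IZR c * e + IZR d <> 0 -> IZR c * e' + IZR d <> 0 ->
  mu_bound 0 1 (moebius a b c d e) (moebius a b c d e') m <-> mu_bound c d e e' m.
Proof.
  intros det q_neq0 q'_neq0.
  destruct (moebius_scaling a b c d det e e' q_neq0 q'_neq0) as [w [w_pos [sub_eq den_eq]]].
  split; intros bound s t st.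
  - specialize (bound _ _ (sl2_pair_neq0 a b c d s t det st)).
    rewrite Z.mul_0_l, Z.mul_1_l, Z.add_0_l, sub_eq, den_eq in bound.
    apply (Rmult_le_reg_l w); [exact w_pos|]; nra.
  - set (s' := (d * s + - b * t)%Z); set (t' := (- c * s + a * t)%Z).
    assert (st' : (s' <> 0 \/ t' <> 0)%Z) by (apply sl2_pair_neq0; [lia|exact st]).
    assert (s_eq : s = (a * s' + b * t')%Z).
    { transitivity (s * (a * d - b * c))%Z; [rewrite det|unfold s', t']; ring. }
    assert (t_eq : t = (c * s' + d * t')%Z).
    { transitivity (t * (a * d - b * c))%Z; [rewrite det|unfold s', t']; ring. }
    specialize (bound s' t' st').
    rewrite Z.mul_0_l, Z.mul_1_l, Z.add_0_l, s_eq, t_eq, sub_eq, den_eq; nra.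
Qed.

Lemma mu_bound_mod c d c' d' e e' m :
  (c mod Z.of_nat n = c' mod Z.of_nat n)%Z -> (d mod Z.of_nat n = d' mod Z.of_nat n)%Z ->
  mu_bound c d e e' m -> mu_bound c' d' e e' m.
Proof.
  intros c_mod d_mod bound s t st.
  rewrite <- (gcd_mod_compat (c * s + d * t)); [exact (bound s t st)|].
  rewrite Z.add_mod, (Z.add_mod (c' * s)), Z.mul_mod, (Z.mul_mod d), (Z.mul_mod c'), (Z.mul_mod d'),
    c_mod, d_mod by lia.
  reflexivity.
Qed.

(* With (s, t) = g (s0, t0), the denominator is scaled by g^2 but gcd(t, n) by at most g. *)
Definition normal_form (c d : Z) (e e' m r : R) : Prop :=
  Z.gcd c d = 1%Z /\ 0 <= e <= 1 /\ mu_bound c d e e' m /\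
  r <= IZR (Z.gcd c (Z.of_nat n)) * Rabs (e - e').

Lemma normal_form_mod c d c' d' e e' m r : Z.gcd c' d' = 1%Z ->
  (c mod Z.of_nat n = c' mod Z.of_nat n)%Z -> (d mod Z.of_nat n = d' mod Z.of_nat n)%Z ->
  normal_form c d e e' m r -> normal_form c' d' e e' m r.
Proof.
  intros coprime c_mod d_mod [_ [e_bounds [bound near]]].
  split; [exact coprime|split; [exact e_bounds|split]].
  - exact (mu_bound_mod c d c' d' e e' m c_mod d_mod bound).
  - rewrite <- (gcd_mod_compat _ _ _ c_mod); exact near.
Qed.

Lemma near_term_primitive x x' r s t : (s <> 0 \/ t <> 0)%Z ->
  r * mu_den x x' s t < IZR (Z.gcd t (Z.of_nat n)) * Rabs (x - x') ->
  exists s0 t0, Z.gcd s0 t0 = 1%Z /\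
    r * mu_den x x' s0 t0 <= IZR (Z.gcd t0 (Z.of_nat n)) * Rabs (x - x').
Proof.
  intros st near.
  set (g := Z.gcd s t).
  assert (g_pos : (0 < g)%Z).
  { assert (g <> 0%Z) by (intros E; apply Z.gcd_eq_0 in E; lia).
    pose proof (Z.gcd_nonneg s t); lia. }
  destruct (Z.gcd_divide_l s t) as [s0 s_eq]; destruct (Z.gcd_divide_r s t) as [t0 t_eq].
  fold g in s_eq, t_eq; exists s0, t0; split.
  - apply Z.mul_reg_r with g; [lia|].
    rewrite Z.mul_1_l, <- Z.gcd_mul_mono_r_nonneg, <- s_eq, <- t_eq by lia; reflexivity.
  - assert (gcd_le : (Z.gcd t (Z.of_nat n) <= g * Z.gcd t0 (Z.of_nat n))%Z).
    { apply Z.divide_pos_le.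
      + assert (Z.gcd t0 (Z.of_nat n) <> 0%Z) by (intros E; apply Z.gcd_eq_0 in E; lia).
        pose proof (Z.gcd_nonneg t0 (Z.of_nat n)); nia.
      + rewrite <- Z.gcd_mul_mono_l_nonneg by lia; apply Z.gcd_greatest.
        * rewrite Z.mul_comm, <- t_eq; apply Z.gcd_divide_l.
        * apply Z.divide_mul_r, Z.gcd_divide_r. }
    apply IZR_le in gcd_le; rewrite mult_IZR in gcd_le.
    replace (mu_den x x' s t) with (IZR g * IZR g * mu_den x x' s0 t0) in near
      by (rewrite s_eq, t_eq, mu_den_scale; reflexivity).
    assert (g_ge_1 : 1 <= IZR g) by (apply IZR_le; lia).
    pose proof (mu_den_nonneg x x' s0 t0); pose proof (Rabs_pos (x - x')).
    destruct (Rle_lt_dec r 0) as [r_nonpos|r_pos].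
    + pose proof (gcd_ge_1 t0); nra.
    + assert (near_g : r * IZR g * mu_den x x' s0 t0 < IZR (Z.gcd t0 (Z.of_nat n)) * Rabs (x - x')).
      { apply Rmult_lt_reg_l with (IZR g); [lra|]; nra. }
      assert (r * mu_den x x' s0 t0 * 1 <= r * mu_den x x' s0 t0 * IZR g)
        by (apply Rmult_le_compat_l; [apply Rmult_le_pos|]; lra).
      lra.
Qed.

Lemma M_ge_half m : M n m -> 1 / 2 <= m.
Proof.
  intros [x [x' [neq mu_eq]]].
  apply mu_eq_Finite in mu_eq as [bound _]; [|exact neq].
  apply (mu_den_bound_ge_half x x'); [exact neq|]; intros s t st.
  specialize (bound s t st); pose proof (gcd_ge_1 (0 * s + 1 * t)).
  pose proof (Rabs_pos (x - x')); nra.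
Qed.

Lemma normal_form_of_M m r : M n m -> r < m -> exists c d e e', normal_form c d e e' m r.
Proof.
  intros [x [x' [neq mu_eq]]] r_lt.
  apply mu_eq_Finite in mu_eq as [bound approx]; [|exact neq].
  destruct (approx r r_lt) as [s [t [st near]]].
  destruct (near_term_primitive x x' r s t st near) as [s0 [t0 [coprime near0]]].
  assert (den_neq0 : mu_den x x' s0 t0 <> 0).
  { assert (st0 : (s0 <> 0 \/ t0 <> 0)%Z).
    { destruct (Z.eq_dec s0 0) as [->|]; [right; intros ->; discriminate|left; assumption]. }
    pose proof (mu_bound_den_pos 0 1 x x' m s0 t0 bound neq st0) as den_pos.
    intros E; rewrite E in den_pos; lra. }
  destruct (moebius_normal_form s0 t0 x x' coprime den_neq0)
    as [b [d [e [e' [det [e_bounds [q_neq0 [q'_neq0 [-> ->]]]]]]]]].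
  exists t0, d, e, e'; split; [|split; [exact e_bounds|split]].
  - apply Zgcd_1_rel_prime, bezout_rel_prime, (Bezout_intro _ _ _ (- b) s0); lia.
  - apply (mu_bound_moebius s0 b); assumption.
  - destruct (moebius_scaling s0 b t0 d det e e' q_neq0 q'_neq0) as [w [w_pos [sub_eq den_eq]]].
    specialize (den_eq 1%Z 0%Z); rewrite mu_den_1_0, !Z.mul_1_r, !Z.mul_0_r, !Z.add_0_r in den_eq.
    rewrite den_eq, sub_eq in near0.
    apply Rmult_le_reg_l with w; [exact w_pos|]; nra.
Qed.

Lemma M_of_normal_form c d e e' m : 0 < m -> normal_form c d e e' m m -> M n m.
Proof.
  intros m_pos [coprime [_ [bound attained]]].
  assert (neq : e <> e').
  { intros ->; rewrite Rminus_diag, Rabs_R0, Rmult_0_r in attained; lra. }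
  destruct (Z.gcd_bezout c d 1 coprime) as [u [v bezout]].
  assert (det : (v * d - - u * c = 1)%Z) by lia.
  assert (dc_neq0 : (- d <> 0 \/ c <> 0)%Z).
  { destruct (Z.eq_dec c 0) as [->|]; [|right; assumption].
    left; intros E; rewrite Z.gcd_0_l in coprime; lia. }
  pose proof (mu_bound_den_pos c d e e' m (- d) c bound neq dc_neq0) as den_pos.
  destruct (mu_den_neq0 e e' (- d) c) as [q_neq0 q'_neq0]; [intros E; rewrite E in den_pos; lra|].
  rewrite opp_IZR in q_neq0, q'_neq0.
  assert (q_neq0' : IZR c * e + IZR d <> 0) by (intros E; apply q_neq0; lra).
  assert (q'_neq0' : IZR c * e' + IZR d <> 0) by (intros E; apply q'_neq0; lra).
  destruct (moebius_scaling v (- u) c d det e e' q_neq0' q'_neq0') as [w [w_pos [sub_eq den_eq]]].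
  assert (neq' : moebius v (- u) c d e <> moebius v (- u) c d e').
  { intros E; rewrite E, Rminus_diag, Rabs_R0 in sub_eq.
    pose proof (Rabs_pos_lt _ (Rminus_eq_contra _ _ neq)); nra. }
  exists (moebius v (- u) c d e), (moebius v (- u) c d e'); split; [exact neq'|].
  apply mu_eq_Finite; [exact neq'|]; split.
  - apply mu_bound_moebius; assumption.
  - intros r r_lt; exists v, c; split.
    + destruct (Z.eq_dec c 0) as [->|]; [left; intros ->; lia|right; assumption].
    + specialize (den_eq 1%Z 0%Z); rewrite mu_den_1_0, !Z.mul_1_r, !Z.mul_0_r, !Z.add_0_r in den_eq.
      rewrite den_eq, sub_eq; nra.
Qed.

Lemma mu_bound_lim c d (e e' m : nat -> R) (l l' x : R) :
  is_lim_seq e l -> is_lim_seq e' l' -> is_lim_seq m x ->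
  (forall k, mu_bound c d (e k) (e' k) (m k)) -> mu_bound c d l l' x.
Proof.
  intros e_lim e'_lim m_lim bound s t st.
  apply (is_lim_seq_le (fun k => IZR (Z.gcd (c * s + d * t) (Z.of_nat n)) * Rabs (e k - e' k))
    (fun k => m k * mu_den (e k) (e' k) s t)
    (IZR (Z.gcd (c * s + d * t) (Z.of_nat n)) * Rabs (l - l')) (x * mu_den l l' s t)).
  - intros k; apply bound, st.
  - apply (is_lim_seq_scal_l _ _ (Finite _)), is_lim_seq_abs_sub; assumption.
  - apply is_lim_seq_mult'; [|apply is_lim_seq_mu_den]; assumption.
Qed.

Lemma M_of_normal_form_limit c d (e e' m r : nat -> R) (l l' x : R) : 0 < x ->
  is_lim_seq e l -> is_lim_seq e' l' -> is_lim_seq m x -> is_lim_seq r x ->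
  (forall k, normal_form c d (e k) (e' k) (m k) (r k)) -> M n x.
Proof.
  intros x_pos e_lim e'_lim m_lim r_lim nf.
  apply (M_of_normal_form c d l l' x x_pos); split; [apply (nf O)|split; [|split]].
  - split.
    + apply (is_lim_seq_le (fun _ => 0) e 0 l); [|apply is_lim_seq_const|exact e_lim].
      intros k; apply (nf k).
    + apply (is_lim_seq_le e (fun _ => 1) l 1); [|exact e_lim|apply is_lim_seq_const].
      intros k; apply (nf k).
  - apply (mu_bound_lim c d e e' m); try assumption; apply nf.
  - apply (is_lim_seq_le r (fun k => IZR (Z.gcd c (Z.of_nat n)) * Rabs (e k - e' k))
      x (IZR (Z.gcd c (Z.of_nat n)) * Rabs (l - l'))); [apply nf|exact r_lim|].
    apply (is_lim_seq_scal_l _ _ (Finite _)), is_lim_seq_abs_sub; assumption.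
Qed.

Lemma M_of_approx (u : nat -> R) (x : R) :
  (forall k, M n (u k)) -> (forall k, Rabs (u k - x) < RinvN k) -> M n x.
Proof.
  intros u_in_M u_close.
  assert (u_lim : is_lim_seq u x) by (apply is_lim_seq_of_dist, u_close).
  assert (x_ge : 1 / 2 <= x).
  { apply (is_lim_seq_le (fun _ => 1 / 2) u (1 / 2) x); [|apply is_lim_seq_const|exact u_lim].
    intros k; apply M_ge_half, u_in_M. }
  assert (normal : forall k, exists c d e e', normal_form c d e e' (u k) (u k - RinvN k)).
  { intros k; apply normal_form_of_M; [apply u_in_M|pose proof (cond_pos (RinvN k)); lra]. }
  destruct (functional_choice _ normal) as [c normal_c].
  destruct (functional_choice _ normal_c) as [d normal_d].
  destruct (functional_choice _ normal_d) as [e normal_e].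
  destruct (functional_choice _ normal_e) as [e' nf].
  assert (bounds : forall k, Rabs (e k) <= Rabs x + 2 /\ Rabs (e' k) <= Rabs x + 2).
  { intros k; destruct (nf k) as [_ [e_bounds [bound _]]].
    pose proof (mu_bound_sub_le _ _ _ _ _ bound) as sub_le.
    assert (RinvN_le_1 : RinvN k <= 1).
    { simpl; rewrite <- Rinv_1; apply Rinv_le_contravar; [lra|pose proof (pos_INR k); lra]. }
    pose proof (Rabs_def2 _ _ (u_close k)); apply Rabs_le_between' in sub_le.
    pose proof (Rle_abs x); split; apply Rabs_le; lra. }
  destruct (extraction_normal_data (Z.of_nat n) c d e e' _ ltac:(lia) bounds)
    as [phi [l [l' [ext [residues [e_lim e'_lim]]]]]].
  apply (M_of_normal_form_limit (c (phi O)) (d (phi O)) (fun k => e (phi k)) (fun k => e' (phi k))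
    (fun k => u (phi k)) (fun k => u (phi k) - RinvN (phi k)) l l' x); try assumption; try lra.
  - apply (is_lim_seq_extraction u phi); assumption.
  - rewrite <- (Rminus_0_r x); apply is_lim_seq_minus'.
    + apply (is_lim_seq_extraction u phi); assumption.
    + apply (is_lim_seq_extraction (fun k => RinvN k) phi); [exact ext|].
      apply is_lim_seq_Reals, RinvN_cv.
  - intros k; destruct (residues k) as [c_mod d_mod].
    apply (normal_form_mod (c (phi k)) (d (phi k))); [apply (nf (phi O))|exact c_mod|exact d_mod|].
    apply nf.
Qed.

End Mu.

Theorem proposition3p6 (n : nat) (hn : (0 < n)%nat) : closed_set (M n).
Proof.
  apply closed_set_of_approx; intros u x u_in_M u_close.
  exact (M_of_approx n hn u x u_in_M u_close).
Qed.
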